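(* In the setting described in the context, let $\{q,q'\}\in F$ be an edge of $K$ with source $S(q,q')=(u,v)$, where $\{u,v\}\in E_i$ has weight $w$. Then \[ d_Z(q,u)+w+d_Z(v,q')\le (1+\varepsilon/2)\,w, \] i.e., the tour in the spanner (with Steiner points) consisting of a $Z$-path from $q$ to $u$, the edge $\{u,v\}$, and a $Z$-path from $v$ to $q'$ has length at most $(1+\varepsilon/2)w$.
   Context: Let $G=(V,E)$ be a connected undirected graph on $n$ vertices with positive integer edge weights $w$ and a unique minimum spanning tree $Z$. Fix an integer $k\ge 2$, $\varepsilon>0$, $t=(2k-1)(1+\varepsilon)$, and let $H$ be the greedy spanner: starting from $H=(V,\emptyset)$, the edges of $E$ are processed in non-decreasing order of weight and $\{u,v\}$ is added to $H$ iff currently $d_H(u,v)>t\cdot w(u,v)$. Order the vertices $v_1,\dots,v_n$ by a preorder traversal of $Z$ and let $L=\sum_{j=2}^n d_Z(v_{j-1},v_j)$. Fix $i\in\{1,\dots,\lceil\log_k n\rceil\}$, set $a=k^{i-1}L/n$, and let $E_i=\{e\in E(H)\setminus E(Z): a<w(e)\le ka\}$. View $Z$ as a metric tree (each edge of weight $x$ is a segment of length $x$) and let $d_Z$ denote distance in it. Let $P=(p_0,\dots,p_L)$ be a path with unit-length edges, where $v_1=p_0$ and $v_j=p_{\ell_j}$ with $\ell_1=0$, $\ell_j=\ell_{j-1}+d_Z(v_{j-1},v_j)$; each point $p_h$ with $\ell_{j-1}\le h\le \ell_j$ is identified with the point of $Z$ on the $Z$-path from $v_{j-1}$ to $v_j$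 at distance $h-\ell_{j-1}$ from $v_{j-1}$ (these added points are Steiner points subdividing edges of $Z\subseteq H$; $\hat H$ denotes $H$ with these subdivisions). Set $s=8L/(\varepsilon a)$, assumed (by scaling) to be such that $s$ and $L/s=\varepsilon a/8$ are integers. For $j\in[s]$ the interval $I_j$ is $\{p_{(j-1)L/s},\dots,p_{jL/s}\}$, and $r_j$ is an arbitrarily chosen interior point of $I_j$; $R=\{r_1,\dots,r_s\}$. For an integer $b\ge 0$, $N_b(j)=\{r_h: h\in[s], |j-h|\le b\}$. The graph $K=(R,F)$ is defined as follows: for each $e=\{u,v\}\in E_i$ with $u\in I_h$, $v\in I_j$, let $b=\lfloor w(e)/a\rfloor$ and let $M$ be an arbitrary maximal matching between $N_b(h)$ and $N_b(j)$; all edges of $M$ are added to $F$, and for each $\{q,q'\}\in M$ with $q\in N_b(h)$, $q'\in N_b(j)$, the edge $\{u,v\}$ is called its source, written $S(q,q')=(u,v)$. *)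

From HB Require Import structures.
From mathcomp Require Import all_boot all_order all_algebra.
From mathcomp Require Import boolp reals.
Set Implicit Arguments. Unset Strict Implicit. Unset Printing Implicit Defensive.
Import Order.TTheory GRing.Theory Num.Theory.
Local Open Scope ring_scope.

Section Setting.
Variable n : nat.
Local Notation V := 'I_n.
Variable w : V -> V -> nat.

Fixpoint walkw (x : V) (zs : seq V) : nat :=
  if zs is y :: zs' then (w x y + walkw y zs')%N else 0%N.

Definition is_walk (S : rel V) (x y : V) (zs : seq V) : bool :=
  path S x zs && (last x zs == y).

Definition walk_wt_exists (S : rel V) (x y : V) (d : nat) : Prop :=
  exists zs, is_walk S x y zs /\ walkw x zs = d.

Lemma gdist_ex_proof (S : rel V) (x y : V) :
  (exists d, walk_wt_exists S x y d) ->
  exists d, `[< walk_wt_exists S x y d >].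
Proof. by case=> d hd; exists d; apply: asboolT. Qed.

(* shortest-path distance d_S(x,y) (0 if y is unreachable, never used so) *)
Definition gdist (S : rel V) (x y : V) : nat :=
  match pselect (exists d, walk_wt_exists S x y d) with
  | left h => ex_minn (gdist_ex_proof h)
  | right _ => 0%N
  end.

Definition shortest_walk (S : rel V) (x y : V) (zs : seq V) : Prop :=
  is_walk S x y zs /\ forall zs', is_walk S x y zs' -> (walkw x zs <= walkw x zs')%N.

Definition connectedR (S : rel V) : Prop := forall x y, exists zs, is_walk S x y zs.

Definition acyclic (S : rel V) : Prop :=
  forall x zs, is_walk S x x zs -> uniq zs -> (size zs < 3)%N.

Definition wt (S : rel V) : nat :=
  (\sum_(xy : V * V | (xy.1 < xy.2)%N && S xy.1 xy.2) w xy.1 xy.2)%N.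

Definition spanning_tree (E S : rel V) : Prop :=
  [/\ symmetric S, subrel S E, connectedR S & acyclic S].

Definition is_mst (E S : rel V) : Prop :=
  spanning_tree E S /\ forall S', spanning_tree E S' -> (wt S <= wt S')%N.

Definition edge_list (E : rel V) : seq (V * V) :=
  [seq xy : V * V <- enum {: V * V} | (xy.1 < xy.2)%N && E xy.1 xy.2].

(* ord x lists the neighbours of x (in the chosen child order); p = parent *)
Fixpoint pre_dfs (ord : V -> seq V) (f : nat) (p x : V) : seq V :=
  if f is f'.+1 then x :: flatten [seq pre_dfs ord f' x y | y <- ord x & y != p]
  else [::].

Variable R : realType.

Definition adjs (S : seq (V * V)) : rel V :=
  fun x y => ((x, y) \in S) || ((y, x) \in S).

(* e is added iff d_H(e.1,e.2) > t * w(e) , i.e. no H-walk of weight <= t*w(e) *)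
Definition greedy_add (t : R) (S : seq (V * V)) (e : V * V) : bool :=
  `[< ~ exists zs, is_walk (adjs S) e.1 e.2 zs /\
                   ((walkw e.1 zs)%:R <= t * (w e.1 e.2)%:R)%R >].

Definition greedy (t : R) (es : seq (V * V)) : seq (V * V) :=
  foldl (fun S e => if greedy_add t S e then rcons S e else S) [::] es.

(* (x, y, t): the zpoint on the edge {x,y} at distance t from x;
   (x, x, 0) is the vertex x *)
Definition zpoint := (V * V * R)%type.
Definition vpt (x : V) : zpoint := (x, x, 0%R).

Fixpoint walk_pt (x : V) (zs : seq V) (t : nat) : zpoint :=
  match zs with
  | [::] => vpt x
  | y :: zs' =>
      if t == 0%N then vpt x
      else if (t < w x y)%N then (x, y, t%:R)
      else walk_pt y zs' (t - w x y)
  end.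

Definition ends (p : zpoint) : seq (V * R) :=
  let: (x, y, t) := p in
  if x == y then [:: (x, t)] else [:: (x, t); (y, ((w x y)%:R - t)%R)].

Definition direct (p p' : zpoint) : seq R :=
  let: (x, y, t) := p in let: (x', y', t') := p' in
  if x == y then [::]
  else if (x == x') && (y == y') then [:: `|t - t'|%R]
  else if (x == y') && (y == x') then [:: `|t - ((w x y)%:R - t')|%R]
  else [::].

(* geodesic distance d_Z in the metric graph of Z *)
Definition dpt (Z : rel V) (p p' : zpoint) : R :=
  let c := [seq (e.2 + (gdist Z e.1 e'.1)%:R + e'.2)%R | e <- ends p, e' <- ends p']
           ++ direct p p' in
  foldr Num.min (head 0%R c) c.

(* vs = (v_1, ..., v_n) (0-based: v_{m+1} = nth r0 vs m);
   ell m = ell_{m+1} = sum_{j=2}^{m+1} d_Z(v_{j-1}, v_j) *)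
Definition ell (Z : rel V) (vs : seq V) (r0 : V) (m : nat) : nat :=
  (\sum_(0 <= j < m) gdist Z (nth r0 vs j) (nth r0 vs j.+1))%N.

Definition Ltot (Z : rel V) (vs : seq V) (r0 : V) : nat := ell Z vs r0 n.-1.

(* p_x : the zpoint of Z identified with position x of P, where zp m is
   the Z-path from v_{m+1} to v_{m+2} *)
Definition pos (Z : rel V) (vs : seq V) (r0 : V) (zp : nat -> seq V) (x : nat)
  : zpoint :=
  let m := find (fun m => x <= ell Z vs r0 m.+1)%N (iota 0 n.-1) in
  if (m < n.-1)%N then walk_pt (nth r0 vs m) (zp m) (x - ell Z vs r0 m)
  else vpt (nth r0 vs n.-1).

Definition in_I (lam : nat) (P : nat -> zpoint) (j : nat) (p : zpoint) : Prop :=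
  exists x, (j.-1 * lam <= x <= j * lam)%N /\ P x = p.

End Setting.

(* N_b(j), as a set of indices h in [s] (standing for r_h) *)
Definition Nb (s : nat) (b : int) (j : nat) : pred nat :=
  fun h => ((1 <= h <= s)%N && (`|j%:Z - h%:Z| <= b)%R).

Definition max_matching (A B : pred nat) (M : seq (nat * nat)) : Prop :=
  [/\ uniq M,
      (forall e, e \in M -> [/\ A e.1, B e.2 & e.1 != e.2]),
      (forall e f, e \in M -> f \in M -> e != f ->
         [&& e.1 != f.1, e.1 != f.2, e.2 != f.1 & e.2 != f.2]) &
      (forall q q', A q -> B q' -> q != q' ->
         exists2 e, e \in M & [|| e.1 == q, e.2 == q, e.1 == q' | e.2 == q'])].

(* Concatenating the shortest Z-paths between consecutive vertices of the
   preorder gives one walk W in Z of length L, and the point p_x of P is the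
   point at distance x along W; so a point of P at position x is within Z-distance
   |x - y| of any vertex sitting at position y.  The endpoint u lies in I_h and q
   is the interior point of some I_h' with |h - h'| <= b = floor(w/a), so their
   positions differ by at most (b + 1) L/s = (b + 1) eps a / 8 <= eps w / 4, using
   b a <= w and a < w.  The same bound for v and q', plus the edge {u, v}, gives
   the claim. *)

From HB Require Import structures.
From mathcomp Require Import all_boot all_order all_algebra.
From mathcomp Require Import boolp reals.
From mathcomp Require Import zify ring lra.
Import Order.TTheory GRing.Theory Num.Theory.
Local Open Scope ring_scope.
Set Implicit Arguments. Unset Strict Implicit. Unset Printing Implicit Defensive.

Section Walks.
Variables (n : nat) (w : 'I_n -> 'I_n -> nat).
Implicit Types (S : rel 'I_n) (x y : 'I_n) (zs : seq 'I_n).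

Lemma walkw_cat x s1 s2 :
  walkw w x (s1 ++ s2) = (walkw w x s1 + walkw w (last x s1) s2)%N.
Proof. by elim: s1 x => [|y s IH] x //=; rewrite IH addnA. Qed.

Lemma gdist_le S x y zs : is_walk S x y zs -> (gdist w S x y <= walkw w x zs)%N.
Proof.
move=> xy_zs; rewrite /gdist; case: pselect => [h|//].
by case: ex_minnP => m _; apply; apply/asboolP; exists zs.
Qed.

Lemma gdist_witness S x y :
  (exists zs, is_walk S x y zs) ->
  exists2 zs, is_walk S x y zs & walkw w x zs = gdist w S x y.
Proof.
case=> zs xy_zs; rewrite /gdist; case: pselect => [h|[]]; last by exists (walkw w x zs), zs.
by case: ex_minnP => m /asboolP [zs' [xy_zs' <-]] _; exists zs'.
Qed.

Lemma gdist_shortest S x y zs :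
  shortest_walk w S x y zs -> gdist w S x y = walkw w x zs.
Proof.
case=> xy_zs zs_min; have [zs' xy_zs' zs'_len] := gdist_witness (ex_intro _ zs xy_zs).
by apply/eqP; rewrite eqn_leq (gdist_le xy_zs) -zs'_len zs_min.
Qed.

Hypothesis wC : forall a b, w a b = w b a.

Lemma walk_rev S x y zs : symmetric S -> is_walk S x y zs ->
  exists2 zs', is_walk S y x zs' & walkw w y zs' = walkw w x zs.
Proof.
move=> Ssym /andP[xzs /eqP <-] {y}; elim: zs x xzs => [|y zs IH] x /=.
  by exists [::]; rewrite /is_walk ?eqxx.
case/andP=> Sxy /IH [zs' /andP[yzs' /eqP zs'_end] zs'_len]; exists (rcons zs' x).
  by rewrite /is_walk rcons_path yzs' zs'_end Ssym Sxy last_rcons /=.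
by rewrite -cats1 walkw_cat zs'_len zs'_end /= addn0 wC addnC.
Qed.

Lemma gdist_sym S x y : symmetric S -> gdist w S x y = gdist w S y x.
Proof.
move=> Ssym; wlog suff: x y / (gdist w S y x <= gdist w S x y)%N.
  by move=> le_yx; apply/eqP; rewrite eqn_leq !le_yx.
have [[zs xy_zs]|no_walk] := pselect (exists zs, is_walk S x y zs).
  have [zs' xy_zs' <-] := gdist_witness (ex_intro _ zs xy_zs).
  by have [zs'' yx_zs'' <-] := walk_rev Ssym xy_zs'; apply: gdist_le.
rewrite /gdist; case: pselect => [h|//]; exfalso; apply: no_walk.
by case: h => d [zs [/(walk_rev Ssym) [zs' xy_zs' _] _]]; exists zs'.
Qed.

End Walks.

Lemma interval_pos_close (lam h q d t r : nat) :
  (1 <= h)%N -> (1 <= q)%N -> (h <= q + d)%N -> (q <= h + d)%N ->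
  (h.-1 * lam <= t <= h * lam)%N -> (q.-1 * lam < r < q * lam)%N ->
  (t <= r + d.+1 * lam)%N /\ (r <= t + d.+1 * lam)%N.
Proof.
move=> h_gt0 q_gt0 hqd qhd /andP[t_ge t_le] /andP[r_gt r_lt].
have hq := leq_mul hqd (leqnn lam); have qh := leq_mul qhd (leqnn lam).
rewrite !mulnDl in hq qh.
have h_pred : (h * lam = h.-1 * lam + lam)%N by rewrite -{1}(prednK h_gt0) mulSn addnC.
have q_pred : (q * lam = q.-1 * lam + lam)%N by rewrite -{1}(prednK q_gt0) mulSn addnC.
rewrite mulSn; split; lia.
Qed.

Section WalkPoints.
Variables (n : nat) (w : 'I_n -> 'I_n -> nat) (R : realType).
Implicit Types (S : rel 'I_n) (x : 'I_n) (W : seq 'I_n).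

Definition walk_vtx x0 W k : 'I_n := last x0 (take k W).

Lemma walk_pt0 x W : walk_pt w R x W 0 = vpt R x.
Proof. by case: W. Qed.

Lemma walk_pt_cat x W1 W2 t :
  walk_pt w R x (W1 ++ W2) t =
  if (t <= walkw w x W1)%N then walk_pt w R x W1 t
  else walk_pt w R (last x W1) W2 (t - walkw w x W1).
Proof.
elim: W1 x t => [|y W1 IH] x t /=.
  by case: ifP => [|_]; [rewrite leqn0 => /eqP ->; rewrite walk_pt0 | rewrite subn0].
case: eqP => [->|/eqP t0] //; case: ltnP => [t_lt|t_ge].
  by rewrite (leq_trans (ltnW t_lt)) ?leq_addr.
rewrite IH subnDA; congr (if _ then _ else _); apply/idP/idP; lia.
Qed.

Lemma walk_pt_end S x W t :
  (forall a b, S a b -> (0 < w a b)%N) -> path S x W ->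
  (walkw w x W <= t)%N -> walk_pt w R x W t = vpt R (last x W).
Proof.
move=> w_gt0; elim: W x t => [|y W IH] x t //= /andP[Sxy yW] W_le.
have w_xy := w_gt0 _ _ Sxy.
have -> : (t == 0%N) = false by apply/eqP; lia.
have -> : (t < w x y)%N = false by apply/negbTE; lia.
by apply: IH => //; lia.
Qed.

Lemma walk_pt_spec S x0 W t :
  path S x0 W -> (t <= walkw w x0 W)%N ->
  exists k,
   (walk_pt w R x0 W t = vpt R (walk_vtx x0 W k) /\ walkw w x0 (take k W) = t) \/
   [/\ S (walk_vtx x0 W k) (walk_vtx x0 W k.+1),
       (walkw w x0 (take k W) < t < walkw w x0 (take k.+1 W))%N,
       walkw w x0 (take k.+1 W) =
         (walkw w x0 (take k W) + w (walk_vtx x0 W k) (walk_vtx x0 W k.+1))%N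
     & walk_pt w R x0 W t =
         (walk_vtx x0 W k, walk_vtx x0 W k.+1, (t - walkw w x0 (take k W))%:R)].
Proof.
elim: W x0 t => [|y W IH] x0 t /=.
  by rewrite leqn0 => _ /eqP ->; exists 0%N; left.
case/andP=> Sxy yW t_le; case: eqP => [->|/eqP t0]; first by exists 0%N; left.
case: ltnP => [t_lt|t_ge].
  exists 0%N; right; rewrite /walk_vtx /= take0 /= addn0 subn0.
  by split => //; apply/andP; split; lia.
have [|k spec] := IH y (t - w x0 y)%N yW; first by lia.
exists k.+1; rewrite /walk_vtx /= -/(walk_vtx y W k) -/(walk_vtx y W k.+1).
case: spec => [[-> Pk]|[Sk /andP[t_gt t_lt] take_k1 ->]]; [left|right].
  by split => //; lia.
split => //; first by apply/andP; split; lia.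
  by rewrite take_k1 addnA.
by congr (_, _, _%:R); lia.
Qed.

Lemma gdist_walk_vtx S x0 W k1 k2 : path S x0 W -> (k1 <= k2)%N ->
  (gdist w S (walk_vtx x0 W k1) (walk_vtx x0 W k2) + walkw w x0 (take k1 W)
     <= walkw w x0 (take k2 W))%N.
Proof.
move=> x0W le_k12; set seg := drop k1 (take k2 W).
have take_k2 : take k2 W = take k1 W ++ seg.
  by rewrite -{1}(cat_take_drop k1 (take k2 W)) take_takel.
have : path S x0 (take k2 W).
  by move: x0W; rewrite -{1}(cat_take_drop k2 W) cat_path => /andP[].
rewrite take_k2 cat_path => /andP[_ seg_path].
rewrite /walk_vtx take_k2 walkw_cat last_cat addnC leq_add2l.
by apply: gdist_le; rewrite /is_walk seg_path eqxx.
Qed.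

Lemma foldr_min_le (a z : R) c : z \in c -> foldr Num.min a c <= z.
Proof.
elim: c => [|y c IH] //=; rewrite in_cons => /orP[/eqP ->|/IH z_ge].
  by rewrite ge_min lexx.
by rewrite ge_min z_ge orbT.
Qed.

Lemma dpt_le S (p p' : zpoint n R) e e' :
  e \in ends w p -> e' \in ends w p' ->
  dpt w S p p' <= e.2 + (gdist w S e.1 e'.1)%:R + e'.2.
Proof.
move=> e_end e'_end; apply: foldr_min_le; rewrite mem_cat; apply/orP; left.
by apply/allpairsP; exists (e, e').
Qed.

Lemma ends_vpt x : ends w (vpt R x) = [:: (x, 0)].
Proof. by rewrite /ends /vpt eqxx. Qed.

Lemma ends_edge a b (t : R) :
  a != b -> ends w (a, b, t) = [:: (a, t); (b, (w a b)%:R - t)].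
Proof. by rewrite /ends => /negbTE ->. Qed.

Section Tree.
Variable S : rel 'I_n.
Hypotheses (Ssym : symmetric S) (Sirr : irreflexive S)
  (wC : forall a b, w a b = w b a).

Lemma walk_pt_near x0 W t t' u D :
  path S x0 W -> (t <= walkw w x0 W)%N -> (t' <= walkw w x0 W)%N ->
  walk_pt w R x0 W t = vpt R u -> (t <= t' + D)%N -> (t' <= t + D)%N ->
  exists2 e, e \in ends w (walk_pt w R x0 W t') & e.2 + (gdist w S e.1 u)%:R <= D%:R.
Proof.
move=> x0W t_le t'_le t_u tD t'D.
have [k [[t_vtx Pk]|[Sk _ _ t_edge]]] := walk_pt_spec x0W t_le; last first.
  by move: t_u; rewrite t_edge => -[a_u b_u _]; rewrite a_u b_u Sirr in Sk.
move: t_u; rewrite t_vtx => -[<- _] {u}.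
have [k' [[-> Pk']|[Sk' /andP[t'_gt t'_lt] Pk'S ->]]] := walk_pt_spec x0W t'_le.
  exists (walk_vtx x0 W k', 0); first by rewrite ends_vpt mem_head.
  rewrite /= add0r ler_nat; case: (leqP k k') => [le_kk'|/ltnW le_k'k].
    by have := gdist_walk_vtx x0W le_kk'; rewrite gdist_sym //; lia.
  by have := gdist_walk_vtx x0W le_k'k; lia.
have ab : walk_vtx x0 W k' != walk_vtx x0 W k'.+1.
  by apply/eqP => ab; rewrite ab Sirr in Sk'.
case: (leqP t t') => [le_tt'|lt_t't].
  have le_kk' : (k <= k')%N.
    by rewrite leqNgt; apply/negP => /(gdist_walk_vtx x0W); lia.
  exists (walk_vtx x0 W k', (t' - walkw w x0 (take k' W))%:R).
    by rewrite ends_edge // mem_head.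
  by have := gdist_walk_vtx x0W le_kk'; rewrite /= -natrD ler_nat gdist_sym //; lia.
have le_k'k : (k'.+1 <= k)%N.
  by rewrite leqNgt ltnS; apply/negP => /(gdist_walk_vtx x0W); lia.
exists (walk_vtx x0 W k'.+1,
        (w (walk_vtx x0 W k') (walk_vtx x0 W k'.+1))%:R - (t' - walkw w x0 (take k' W))%:R).
  by rewrite ends_edge // inE mem_head orbT.
by have := gdist_walk_vtx x0W le_k'k; rewrite /= -natrB -?natrD ?ler_nat; lia.
Qed.

Lemma dpt_walk_pt_vpt x0 W t t' u D :
  path S x0 W -> (t <= walkw w x0 W)%N -> (t' <= walkw w x0 W)%N ->
  walk_pt w R x0 W t = vpt R u -> (t <= t' + D)%N -> (t' <= t + D)%N ->
  dpt w S (walk_pt w R x0 W t') (vpt R u) <= D%:R /\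
  dpt w S (vpt R u) (walk_pt w R x0 W t') <= D%:R.
Proof.
move=> x0W t_le t'_le t_u tD t'D.
have [e e_end e_le] := walk_pt_near x0W t_le t'_le t_u tD t'D.
have u_end : (u, 0) \in ends w (vpt R u) by rewrite ends_vpt mem_head.
split; [apply: le_trans (dpt_le S e_end u_end) _|apply: le_trans (dpt_le S u_end e_end) _].
  by rewrite addr0.
by rewrite /= add0r addrC gdist_sym.
Qed.

Lemma dpt_interval_le x0 W lam s h q d t r u :
  path S x0 W -> (lam * s)%N = walkw w x0 W ->
  (1 <= h <= s)%N -> (1 <= q <= s)%N -> (h <= q + d)%N -> (q <= h + d)%N ->
  (h.-1 * lam <= t <= h * lam)%N -> (q.-1 * lam < r < q * lam)%N ->
  walk_pt w R x0 W t = vpt R u ->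
  dpt w S (walk_pt w R x0 W r) (vpt R u) <= (d.+1 * lam)%:R /\
  dpt w S (vpt R u) (walk_pt w R x0 W r) <= (d.+1 * lam)%:R.
Proof.
move=> x0W W_len /andP[h_gt0 h_le] /andP[q_gt0 q_le] hqd qhd t_in r_in t_u.
have [t_le_r r_le_t] := interval_pos_close h_gt0 q_gt0 hqd qhd t_in r_in.
have hs : (h * lam <= walkw w x0 W)%N by rewrite -W_len mulnC leq_mul.
have qs : (q * lam <= walkw w x0 W)%N by rewrite -W_len mulnC leq_mul.
by apply: dpt_walk_pt_vpt t_u t_le_r r_le_t => //; lia.
Qed.

End Tree.
End WalkPoints.

Section JoinedWalk.
Variables (n : nat) (w : 'I_n -> 'I_n -> nat) (R : realType) (Z : rel 'I_n).
Variables (vs : seq 'I_n) (r0 : 'I_n) (zp : nat -> seq 'I_n).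
Hypothesis w_gt0 : forall a b, Z a b -> (0 < w a b)%N.
Hypothesis zp_shortest : forall m, (m < n.-1)%N ->
  shortest_walk w Z (nth r0 vs m) (nth r0 vs m.+1) (zp m).

Definition join_walks m := flatten [seq zp j | j <- iota 0 m].

Lemma join_walksD m1 m2 :
  join_walks (m1 + m2) = join_walks m1 ++ flatten [seq zp j | j <- iota m1 m2].
Proof. by rewrite /join_walks iotaD map_cat flatten_cat. Qed.

Lemma join_walksS m : join_walks m.+1 = join_walks m ++ zp m.
Proof. by rewrite -addn1 join_walksD /= cats0. Qed.

Lemma ell0 : ell w Z vs r0 0 = 0%N.
Proof. by rewrite /ell big_geq. Qed.

Lemma ellS m :
  ell w Z vs r0 m.+1 = (ell w Z vs r0 m + gdist w Z (nth r0 vs m) (nth r0 vs m.+1))%N.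
Proof. by rewrite /ell big_nat_recr. Qed.

Lemma join_walks_spec m : (m <= n.-1)%N ->
  [/\ path Z (nth r0 vs 0) (join_walks m),
      last (nth r0 vs 0) (join_walks m) = nth r0 vs m &
      walkw w (nth r0 vs 0) (join_walks m) = ell w Z vs r0 m].
Proof.
elim: m => [|m IH] m_le; first by rewrite /join_walks /= ell0.
have [path_m last_m len_m] := IH (ltnW m_le).
have zp_m := zp_shortest m_le; have [/andP[zp_path /eqP zp_last] _] := zp_m.
rewrite join_walksS cat_path last_cat walkw_cat last_m path_m zp_path zp_last len_m.
by rewrite ellS (gdist_shortest zp_m).
Qed.

Lemma pos_join_walks x :
  pos w R Z vs r0 zp x = walk_pt w R (nth r0 vs 0) (join_walks n.-1) x.
Proof.
rewrite /pos; set N := n.-1; set p := (fun m => _); set m := find p _.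
have [path_N last_N len_N] := join_walks_spec (leqnn N).
have m_le : (m <= N)%N by have := find_size p (iota 0 N); rewrite size_iota.
have before_m j : (j < m)%N -> (ell w Z vs r0 j.+1 < x)%N.
  move=> lt_jm; have := before_find 0 lt_jm.
  by rewrite nth_iota ?(leq_trans lt_jm) // add0n /p => /negbT; rewrite -ltnNge.
have ell_m : (ell w Z vs r0 m <= x)%N.
  by case: (m) before_m => [|j] before_m; [rewrite ell0 | exact/ltnW/before_m].
case: ltnP => [lt_mN|ge_mN]; last first.
  have m_N : m = N by apply/eqP; rewrite eqn_leq m_le ge_mN.
  by rewrite (walk_pt_end R w_gt0 path_N) ?last_N // len_N -m_N.
have x_le : (x <= ell w Z vs r0 m.+1)%N.
  have has_p : has p (iota 0 N) by rewrite has_find size_iota.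
  by have := nth_find 0 has_p; rewrite -/m nth_iota.
have [path_m last_m len_m] := join_walks_spec (ltnW lt_mN).
have zp_m := zp_shortest lt_mN; have [/andP[zp_path _] _] := zp_m.
have -> : join_walks N =
    join_walks m ++ zp m ++ flatten [seq zp j | j <- iota m.+1 (N - m.+1)].
  by rewrite catA -join_walksS -join_walksD subnKC.
rewrite walk_pt_cat len_m last_m; case: leqP => [x_le_m|x_gt_m].
  have -> : x = ell w Z vs r0 m by apply/eqP; rewrite eqn_leq x_le_m ell_m.
  by rewrite subnn walk_pt0 (walk_pt_end R w_gt0 path_m) ?len_m // last_m.
rewrite walk_pt_cat ifT //.
by move: x_le; rewrite ellS (gdist_shortest zp_m); lia.
Qed.

End JoinedWalk.

Lemma grid_scale (R : realFieldType) (eps c N : R) (L s lam : nat) :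
  0 < eps -> 0 < c -> 0 < N -> (0 < s)%N ->
  s%:R = 8 * L%:R / (eps * (c * L%:R / N)) -> lam%:R = L%:R / s%:R :> R ->
  [/\ 0 < c * L%:R / N, lam%:R = eps * (c * L%:R / N) / 8 & (lam * s)%N = L].
Proof.
move=> eps_gt0 c_gt0 N_gt0 s_gt0 sE lamE.
have L_gt0 : (0 < L)%N.
  rewrite lt0n; apply/eqP => L0; move: sE; rewrite L0 !(mul0r, mulr0, invr0).
  by move/eqP; rewrite pnatr_eq0; lia.
have a_gt0 : 0 < c * L%:R / N by rewrite divr_gt0 ?mulr_gt0 ?ltr0n.
split => //.
  by rewrite lamE sE; field; rewrite !gt_eqF ?ltr0n.
by apply/eqP; rewrite -(eqr_nat R) natrM lamE divfK // pnatr_eq0 -lt0n.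
Qed.

Lemma detour_spread_le (R : archiRealFieldType) (eps a W : R) (d lam : nat) :
  0 < eps -> 0 < a -> a < W -> lam%:R = eps * a / 8 ->
  d%:Z <= Num.floor (W / a) -> (d.+1 * lam)%:R <= eps * W / 4.
Proof.
move=> eps_gt0 a_gt0 lt_aW lamE d_le.
have : d%:R <= W / a by apply: le_trans (floor_le _); rewrite -[d%:R]/(d%:Z%:~R) ler_int.
rewrite ler_pdivlMr // natrM lamE -addn1 natrD => da_le; nra.
Qed.

Lemma distz_le_witness (h q : nat) (b : int) : `|h%:Z - q%:Z| <= b ->
  exists d : nat, [/\ (h <= q + d)%N, (q <= h + d)%N & d%:Z <= b].
Proof. by move=> hqb; exists `|h%:Z - q%:Z|%N; split; lia. Qed.

Lemma tour_le (R : realFieldType) (x y W e : R) :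
  x <= e * W / 4 -> y <= e * W / 4 -> x + W + y <= (1 + e / 2) * W.
Proof. by move=> x_le y_le; lra. Qed.

Unset Implicit Arguments.

Theorem proposition1
  (R : realType) (n : nat) (E : rel 'I_n) (w : 'I_n -> 'I_n -> nat)
  (* G = (V,E): connected simple undirected graph, positive integer weights *)
  (HEsym : symmetric E) (HEirr : irreflexive E)
  (Hwsym : forall x y, w x y = w y x)
  (Hwpos : forall x y, E x y -> (0 < w x y)%N)
  (Hconn : connectedR E)
  (* Z is the unique minimum spanning tree *)
  (Z : rel 'I_n) (HZ : is_mst w E Z)
  (HZuniq : forall Z' : rel 'I_n, is_mst w E Z' -> Z' =2 Z)
  (* parameters k >= 2, eps > 0 ; t = (2k-1)(1+eps) *)
  (k : nat) (eps : R) (Hk : (2 <= k)%N) (Heps : 0 < eps)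
  (* greedy processing order: the edges of E, sorted by non-decreasing weight *)
  (es : seq ('I_n * 'I_n)) (Hes_perm : perm_eq es (edge_list E))
  (Hes_sorted : sorted (fun e f => (w e.1 e.2 <= w f.1 f.2)%N) es)
  (* preorder traversal of Z from rt, children visited in order ord x *)
  (rt : 'I_n) (ord : 'I_n -> seq 'I_n)
  (Hord : forall x, perm_eq (ord x) [seq y <- enum 'I_n | Z x y])
  (* zp m : the Z-path from v_{m+1} to v_{m+2} *)
  (zp : nat -> seq 'I_n)
  (Hzp : forall m, (m < n.-1)%N ->
     shortest_walk w Z (nth rt (pre_dfs ord n rt rt) m)
                       (nth rt (pre_dfs ord n rt rt) m.+1) (zp m))
  (* the scale i and a = k^(i-1) L / n *)
  (i : nat) (Hi : (1 <= i <= up_log k n)%N)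
  (* s = 8L/(eps a) and L/s are integers *)
  (s lam : nat)
  (Hs : s%:R = 8 * (Ltot w Z (pre_dfs ord n rt rt) rt)%:R /
               (eps * ((k ^ i.-1)%N%:R * (Ltot w Z (pre_dfs ord n rt rt) rt)%:R / n%:R)))
  (Hlam : lam%:R = (Ltot w Z (pre_dfs ord n rt rt) rt)%:R / s%:R :> R)
  (* r_j : an interior point of I_j (given by its position on P) *)
  (r : nat -> nat)
  (Hr : forall j, (1 <= j <= s)%N -> (j.-1 * lam < r j < j * lam)%N)
  (* the edge {u,v} of E_i *)
  (u v : 'I_n)
  (HuvH : ((u, v) \in greedy w ((2 * k - 1)%N%:R * (1 + eps)) es) ||
          ((v, u) \in greedy w ((2 * k - 1)%N%:R * (1 + eps)) es))
  (HuvZ : ~~ Z u v)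
  (Hwa : (k ^ i.-1)%N%:R * (Ltot w Z (pre_dfs ord n rt rt) rt)%:R / n%:R < (w u v)%:R :> R)
  (Hwb : (w u v)%:R <= k%:R *
           ((k ^ i.-1)%N%:R * (Ltot w Z (pre_dfs ord n rt rt) rt)%:R / n%:R) :> R)
  (* u in I_h, v in I_j *)
  (h j : nat) (Hh : (1 <= h <= s)%N) (Hj : (1 <= j <= s)%N)
  (HuI : in_I lam (pos w R Z (pre_dfs ord n rt rt) rt zp) h (vpt R u))
  (HvI : in_I lam (pos w R Z (pre_dfs ord n rt rt) rt zp) j (vpt R v))
  (* M : a maximal matching between N_b(h) and N_b(j), b = floor(w/a) *)
  (M : seq (nat * nat))
  (HM : max_matching
     (Nb s (Num.floor ((w u v)%:R /
        ((k ^ i.-1)%N%:R * (Ltot w Z (pre_dfs ord n rt rt) rt)%:R / n%:R) : R)) h)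
     (Nb s (Num.floor ((w u v)%:R /
        ((k ^ i.-1)%N%:R * (Ltot w Z (pre_dfs ord n rt rt) rt)%:R / n%:R) : R)) j) M)
  (* {q,q'} = {r_qi, r_qi'} in M, with source (u,v) *)
  (qi qi' : nat) (Hq : (qi, qi') \in M) :
  dpt w Z (pos w R Z (pre_dfs ord n rt rt) rt zp (r qi)) (vpt R u)
  + (w u v)%:R
  + dpt w Z (vpt R v) (pos w R Z (pre_dfs ord n rt rt) rt zp (r qi'))
  <= (1 + eps / 2) * (w u v)%:R.
Proof.
have [[Zsym Zsub _ _] _] := HZ.
have Zw_gt0 a b : Z a b -> (0 < w a b)%N by move/Zsub/Hwpos.
have Zirr : irreflexive Z by move=> x; apply/negbTE/negP => /Zsub; rewrite HEirr.
set vs := pre_dfs ord n rt rt in Hzp Hs Hlam Hwa Hwb HuI HvI HM *.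
set L := Ltot w Z vs rt in Hs Hlam Hwa Hwb HM *.
set a := (_ * L%:R / n%:R : R) in Hs Hwa Hwb HM *.
have n_gt0 : (0 < n)%N by apply: leq_ltn_trans (ltn_ord u).
have [a_gt0 lamE lam_s] : [/\ 0 < a, lam%:R = eps * a / 8 & (lam * s)%N = L].
  by apply: grid_scale; rewrite ?ltr0n ?expn_gt0 ?(leq_trans _ Hk) //; case/andP: Hh; lia.
have [W_path _ W_len] := join_walks_spec Hzp (leqnn n.-1).
have {}W_len := etrans lam_s (esym W_len).
case: HM => _ HM _ _; have /= [/andP[q_in qb] /andP[q'_in q'b] _] := HM _ Hq.
case: HuI => xu [xu_in]; rewrite pos_join_walks // => xu_u.
case: HvI => xv [xv_in]; rewrite pos_join_walks // => xv_v.
rewrite !pos_join_walks //.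
have [d [hq qh qb_le]] := distz_le_witness qb.
have [d' [jq qj q'b_le]] := distz_le_witness q'b.
have [du_le _] := dpt_interval_le Zsym Zirr Hwsym W_path W_len Hh q_in hq qh xu_in
  (Hr _ q_in) xu_u.
have [_ dv_le] := dpt_interval_le Zsym Zirr Hwsym W_path W_len Hj q'_in jq qj xv_in
  (Hr _ q'_in) xv_v.
apply: tour_le.
  exact: le_trans du_le (detour_spread_le Heps a_gt0 Hwa lamE qb_le).
exact: le_trans dv_le (detour_spread_le Heps a_gt0 Hwa lamE q'b_le).
Qed.
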